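(* Let $T$ be a map on $[0,1]$ and $\nu$ a $T$-invariant exponentially mixing probability measure. Let $s\ge0$. Then for $\nu$-a.e. $x$, $\{y:\overline R(x,y)\ge s\}\subset\{y:\overline d_\nu(y)\ge s\}$.
   Context: A $T$-invariant measure $\nu$ on $[0,1]$ is exponentially mixing if there exist $C>0$ and $0<\beta<1$ such that for every ball $A$, every Borel set $B$ and every $n\ge1$, $|\nu(A\cap T^{-n}B)-\nu(A)\nu(B)|\le C\beta^n\nu(B)$. $B(y,r)$ is the open ball. $\tau_r(x,y)=\inf\{n\ge1:T^nx\in B(y,r)\}$ and $\overline R(x,y)=\limsup_{r\to0}\frac{\log\tau_r(x,y)}{-\log r}$, with $\tau_r(x,y)=\infty$ and $\overline R(x,y)=\infty$ when the forward orbit $\{T^nx:n\ge1\}$ misses $B(y,r)$. $\overline d_\nu(y)=\limsup_{r\to0}\frac{\log\nu(B(y,r))}{\log r}$. *)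

(* The phase space [0,1] is modelled inside R:
   the measure is a probability on R concentrated on `[0,1], T maps [0,1] into itself. *)
From HB Require Import structures.
From mathcomp Require Import all_boot all_order all_algebra.
From mathcomp Require Import all_classical all_reals all_analysis.
Set Implicit Arguments. Unset Strict Implicit. Unset Printing Implicit Defensive.
Import Order.TTheory GRing.Theory Num.Theory.
Import numFieldNormedType.Exports.
Local Open Scope classical_set_scope.
Local Open Scope ring_scope.

Section Defs.
Context {R : realType}.

Definition I01 : set R := `[0%R, 1%R].

Definition limsup0 (g : R -> \bar R) : \bar R :=
  ereal_inf [set ereal_sup [set g r | r in [set r : R | 0 < r < delta]]
            | delta in [set delta : R | 0 < delta]].

(* log tau_r(x,y) / (- log r), with value +oo when the forward orbit misses B(y,r);
   tau_r(x,y) = inf{ n >= 1 : T^n x \in B(y,r) } *)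
Definition log_tau_ratio (T : R -> R) (x y r : R) : \bar R :=
  match pselect (exists n : nat, (1 <= n)%N /\ ball y r (iter n T x)) with
  | left h => ((ln (xget 0%N [set n : nat | (1 <= n)%N /\ ball y r (iter n T x)
                 /\ forall m : nat, (1 <= m)%N -> ball y r (iter m T x) -> (n <= m)%N])%:R)
               / (- ln r))%:E
  | right _ => +oo%E
  end.

Definition upper_rec (T : R -> R) (x y : R) : \bar R :=
  limsup0 (log_tau_ratio T x y).

(* log nu(B(y,r)) / log r, with log 0 = -oo giving +oo *)
Definition log_ball_ratio (nu : set R -> \bar R) (y r : R) : \bar R :=
  if fine (nu (ball y r)) == 0 then +oo%E
  else (ln (fine (nu (ball y r))) / ln r)%:E.

Definition upper_dim (nu : set R -> \bar R) (y : R) : \bar R :=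
  limsup0 (log_ball_ratio nu y).

(* T-invariance of nu (T viewed as a map of [0,1]) *)
Definition T_invariant (T : R -> R) (nu : set R -> \bar R) : Prop :=
  forall B : set R, measurable B -> nu (I01 `&` T @^-1` B) = nu B.

(* exponential mixing: balls A of [0,1] are ball c r `&` [0,1], c \in [0,1] *)
Definition exp_mixing (T : R -> R) (nu : set R -> \bar R) : Prop :=
  exists C beta : R, 0 < C /\ 0 < beta < 1 /\
    forall (c r : R) (B : set R) (n : nat), c \in I01 -> measurable B -> (1 <= n)%N ->
      let A := ball c r `&` I01 in
      (`| nu (A `&` (iter n T) @^-1` B) - nu A * nu B | <= (C * beta ^+ n)%:E * nu B)%E.

End Defs.

(* Fix 0 <= t < u. At scale k, [0,1] is covered by about e^(k+3) balls of radius
   2 e^-(k+3); call such a ball heavy when its mass is at least e^-(t(k+3)).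
   Exponential mixing, applied along blocks of G(k+1) steps, makes each block miss a
   heavy ball with probability at most 1 - e^-(t(k+3))/2, so the points whose orbit
   avoids some heavy ball during N_k = O(k^2 e^(tk)) steps form a set of measure at
   most 2^-(k+1). By Borel-Cantelli, almost every x eventually visits every heavy ball
   of scale k within N_k <= e^(uk) steps. If the upper local dimension at y is below t,
   then for large k the covering ball that contains B(y, e^-(k+3)) is heavy, so for
   r ~ e^-k the orbit of x enters B(y, r) within r^-u steps: upper_rec x y <= u.
   Letting t and u increase to s along a sequence gives the theorem. *)

From HB Require Import structures.
From mathcomp Require Import all_boot all_order all_algebra.
From mathcomp Require Import all_classical all_reals all_analysis.
From mathcomp Require Import measurable_realfun lra ring.
Import Order.TTheory GRing.Theory Num.Theory.
Import numFieldNormedType.Exports.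
Local Open Scope classical_set_scope.
Local Open Scope ring_scope.

Lemma expR1_ge2 {R : realType} : 2 <= expR (1 : R).
Proof. by have := @expR_ge1Dx R 1; rewrite (_ : 1 + 1 = 2 :> R). Qed.

Lemma sqr_le_expR {R : realType} (a c : R) : 0 < a ->
  exists K, forall k, (K <= k)%N -> c * k%:R ^+ 2 <= expR (a * k%:R).
Proof.
move=> a0; exists (Num.truncn (6 * c / a ^+ 3)).+1 => k Kk.
have a30 : 0 < a ^+ 3 by exact: exprn_gt0.
have ck : c <= k%:R * a ^+ 3 / 6.
  rewrite ler_pdivlMr // mulrC -ler_pdivrMr //.
  by apply/ltW/(lt_le_trans (truncnS_gt _)); rewrite ler_nat.
have cube : (a * k%:R) ^+ 3 / 6 <= expR (a * k%:R).
  have := @expR_ge1Dxn R (a * k%:R) 2 (mulr_ge0 (ltW a0) (ler0n _ _)).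
  rewrite (_ : 3`!%:R = 6 :> R) //; apply: le_trans; lra.
apply: le_trans cube.
have k2 : 0 <= (k%:R : R) ^+ 2 by exact: exprn_ge0.
have := ler_wpM2r k2 ck.
by rewrite (_ : (a * k%:R) ^+ 3 / 6 = k%:R * a ^+ 3 / 6 * k%:R ^+ 2) //; ring.
Qed.

Section scales.
Context {R : realType} (t : R) (G : nat).
Hypothesis t_ge0 : 0 <= t.

Definition radius (k : nat) : R := expR (- (k%:R + 3)).

Definition threshold (k : nat) : R := expR (- (t * (k%:R + 3))).

Definition gap (k : nat) : nat := (G * k.+1)%N.

(* This many blocks give (1 - threshold k / 2) ^+ blocks k <= e^-(2k+5), which beats
   the e^(k+3) centres in [union_bound]. *)
Definition blocks (k : nat) : nat := (Num.truncn ((4 * k%:R + 10) / threshold k)).+1.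

Definition horizon (k : nat) : nat := (blocks k * gap k)%N.

Definition last_center (k : nat) : nat := Num.truncn (expR (k%:R + 3 : R)).

Lemma radius_gt0 k : 0 < radius k. Proof. exact: expR_gt0. Qed.

Lemma radius_last_center k : radius k * expR (k%:R + 3) = 1.
Proof. by rewrite /radius -expRD addNr expR0. Qed.

Definition center (k i : nat) : R := i%:R * radius k.

Lemma center_I01 k i : (i <= last_center k)%N -> center k i \in I01.
Proof.
move=> iM; rewrite inE /I01 /= in_itv /=; apply/andP; split.
  by rewrite mulr_ge0 // ltW // radius_gt0.
rewrite /center -[X in _ <= X](radius_last_center k) mulrC ler_pM2l ?radius_gt0 //.
have := truncn_le (expR (k%:R + 3 : R)); rewrite expR_ge0; apply: le_trans.
by rewrite ler_nat.
Qed.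

Lemma near_center k y : y \in I01 ->
  exists2 i, (i <= last_center k)%N & ball (center k i) (radius k) y.
Proof.
rewrite inE /I01 /= in_itv /= => /andP[y0 y1].
have h0 := radius_gt0 k; have yh0 : 0 <= y / radius k by rewrite divr_ge0 // ltW.
exists (Num.truncn (y / radius k)).
  apply: le_truncn; rewrite ler_pdivrMr // mulrC radius_last_center; exact: y1.
have lo := truncn_le (y / radius k); have hi := truncnS_gt (y / radius k).
rewrite yh0 ler_pdivlMr // in lo; rewrite ltr_pdivrMr // -natr1 in hi.
rewrite /ball /= /center ltr_norml; apply/andP; split; lra.
Qed.

Lemma scale_of_small_radius K r : 0 < r -> r < expR (- (K%:R + 1)) ->
  exists k, [/\ (K <= k)%N, k%:R <= - ln r & 3 * radius k < r].
Proof.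
move=> r0 rK.
have lr : K%:R + 1 < - ln r by rewrite ltrNr -ltr_expR lnK ?posrE.
have K0 : 0 <= (K%:R : R) by [].
exists (Num.truncn (- ln r)); split.
- by rewrite truncn_ge_nat; lra.
- by rewrite truncn_le; lra.
have e3 : 3 < expR (2 : R).
  by rewrite (_ : 2 = 1 + 1 :> R) // expRD; have := expR1_ge2 (R := R); nra.
have := truncnS_gt (- ln r); rewrite -natr1 => hi.
apply: lt_trans (_ : expR (2 : R) * radius (Num.truncn (- ln r)) < r).
  by rewrite ltr_pM2r ?radius_gt0.
rewrite /radius -expRD -[X in _ < X](lnK (x := r)) ?posrE // ltr_expR; lra.
Qed.

Lemma threshold_gt0 k : 0 < threshold k. Proof. exact: expR_gt0. Qed.

Lemma threshold_le1 k : threshold k <= 1.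
Proof. by rewrite /threshold expR_le1 oppr_le0; apply: mulr_ge0 => //; lra. Qed.

Lemma threshold_radius k : threshold k = expR (t * ln (radius k)).
Proof. by rewrite /radius expRK; congr expR; ring. Qed.

Lemma blocks_ge k : 4 * k%:R + 10 <= (blocks k)%:R * threshold k.
Proof. by rewrite -ler_pdivrMr ?threshold_gt0 // ltW // truncnS_gt. Qed.

Lemma blocks_le k : (blocks k)%:R <= (4 * k%:R + 11) * expR (t * (k%:R + 3)).
Proof.
have inv : (threshold k)^-1 = expR (t * (k%:R + 3)) by rewrite /threshold expRN invrK.
have e1 : 1 <= expR (t * (k%:R + 3)).
  by rewrite -expR0 ler_expR; apply: mulr_ge0 => //; lra.
have x0 : 0 <= (4 * k%:R + 10) / threshold k by rewrite divr_ge0 ?ltW ?threshold_gt0.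
have := truncn_le ((4 * k%:R + 10) / threshold k); rewrite x0 inv => h.
rewrite /blocks -addn1 natrD inv; lra.
Qed.

Lemma horizon_le_expR (u : R) : t < u ->
  exists K, forall k, (K <= k)%N -> (horizon k)%:R <= expR (u * k%:R).
Proof.
move=> tu; set c := 30 * G%:R * expR (3 * t).
have [K hK] := @sqr_le_expR R (u - t) c ltac:(lra).
exists (maxn K 1) => k; rewrite geq_max => /andP[Kk k1].
have k1r : 1 <= (k%:R : R) by rewrite ler1n.
have G0 : 0 <= (G%:R : R) by [].
have gap_le : ((gap k)%:R : R) <= G%:R * (2 * k%:R).
  by rewrite /gap natrM ler_wpM2l // -natr1; lra.
have eu : expR (u * k%:R) = expR (t * (k%:R + 3)) * (expR ((u - t) * k%:R) / expR (3 * t)).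
  by rewrite mulrA -expRD -expRB; congr expR; ring.
have pos := expR_gt0 (t * (k%:R + 3)); have pos3 := expR_gt0 (3 * t).
have poly : (4 * k%:R + 11) * (G%:R * (2 * k%:R)) <= expR ((u - t) * k%:R) / expR (3 * t).
  rewrite ler_pdivlMr //; apply: le_trans (hK k Kk); rewrite /c.
  have : 0 <= G%:R * expR (3 * t) * (k%:R ^+ 2 - k%:R) by apply: mulr_ge0; nra.
  nra.
rewrite eu /horizon natrM.
apply: le_trans (ler_pM (ler0n _ _) (ler0n _ _) (blocks_le k) gap_le) _.
set X := expR (t * _) in pos *.
rewrite [leLHS](_ : _ = X * ((4 * k%:R + 11) * (G%:R * (2 * k%:R)))); last by ring.
by rewrite ler_wpM2l // ltW.
Qed.

Lemma mixing_gap (C beta : R) k : 0 < C -> 0 < beta < 1 ->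
  `|ln C| + 1 + 3 * t <= G%:R * (- ln beta) -> C * beta ^+ gap k <= threshold k / 2.
Proof.
move=> C0 /andP[b0 b1] hG.
rewrite -[C]lnK ?posrE // -[beta]lnK ?posrE // -expRM_natl -expRD.
have half : expR (- (t * (k%:R + 3)) - 1) <= threshold k / 2.
  rewrite expRB ler_wpM2l ?expR_ge0 // lef_pV2 ?posrE ?expR_gt0 //; exact: expR1_ge2.
apply: le_trans half; rewrite ler_expR.
have := ler_wpM2l (ler0n R k.+1) hG; rewrite /gap natrM -natr1.
have := ler_norm (ln C).
have : 0 <= k%:R * `|ln C| by apply: mulr_ge0.
have : 0 <= k%:R * t by apply: mulr_ge0.
have : 0 <= (k%:R : R) by [].
lra.
Qed.

Lemma union_bound k :
  (last_center k).+1%:R * (1 - threshold k / 2) ^+ blocks k <= 1 / (2 ^ k.+1)%:R.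
Proof.
have m0 := threshold_gt0 k; have m1 := threshold_le1 k.
set m := threshold k in m0 m1 *.
have decay : (1 - m / 2) ^+ blocks k <= expR (- (2 * k%:R + 5)).
  apply: (@le_trans _ _ (expR (- (m / 2)) ^+ blocks k)).
    apply: lerXn2r; rewrite ?nnegrE ?expR_ge0; [lra | by [] |].
    by have := @expR_ge1Dx R (- (m / 2)).
  by rewrite -expRM_natl ler_expR; have := blocks_ge k; rewrite -/m; lra.
have E1 : 1 <= expR ((k%:R : R) + 3) by rewrite -expR0 ler_expR addr_ge0.
have centers : (last_center k).+1%:R <= 2 * expR (k%:R + 3) :> R.
  rewrite -[(last_center k).+1]addn1 natrD.
  by have := truncn_le (expR ((k%:R : R) + 3)); rewrite expR_ge0; lra.
have prod : 2 * expR (k%:R + 3) * expR (- (2 * k%:R + 5)) = 2 * expR (- (k%:R + 2)) :> R.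
  by rewrite -mulrA -expRD; congr (_ * expR _); ring.
have pow2 : 2 * expR (- ((k%:R : R) + 2)) <= 1 / (2 ^ k.+1)%:R.
  rewrite expRN natrX ler_pdivlMr ?exprn_gt0 // mulrAC ler_pdivrMr ?expR_gt0 // mul1r.
  rewrite (_ : k%:R + 2 = k.+2%:R * 1 :> R); last by rewrite mulr1 -[k.+2]addn2 natrD.
  rewrite expRM_natl -exprS; apply: lerXn2r; rewrite ?nnegrE ?expR_ge0 //; exact: expR1_ge2.
apply: le_trans pow2; rewrite -prod.
by apply: ler_pM => //; apply: exprn_ge0; lra.
Qed.
End scales.


Section limsup0.
Context {R : realType} (g : R -> \bar R).

Lemma limsup0_lt (x : \bar R) : (limsup0 g < x)%E ->
  exists2 d : R, 0 < d & forall r, 0 < r < d -> (g r < x)%E.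
Proof.
move=> /ereal_inf_lt [_ [d /= d0 <-]] h; exists d => // r rd.
by apply: le_lt_trans h; apply: ereal_sup_ubound; exists r.
Qed.

Lemma limsup0_le (x : \bar R) (d : R) : 0 < d ->
  (forall r, 0 < r < d -> (g r <= x)%E) -> (limsup0 g <= x)%E.
Proof.
move=> d0 h; apply: ge_ereal_inf; exists (ereal_sup [set g r | r in [set r | 0 < r < d]]).
  by exists d.
by apply: ge_ereal_sup => _ [r /= rd <-]; exact: h.
Qed.

Lemma limsup0_ge (x : \bar R) :
  (forall d : R, 0 < d -> exists2 r, 0 < r < d & (x <= g r)%E) -> (x <= limsup0 g)%E.
Proof.
move=> h; apply: le_ereal_inf_tmp => _ [d /= d0 <-].
have [r rd xr] := h d d0.
by apply: le_ereal_sup_tmp; exists (g r) => //; exists r.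
Qed.

End limsup0.

Section local_dimension.
Context {R : realType} (nu : probability R R).

Lemma log_ball_ratio_ge0 y r : 0 < r < 1 -> (0 <= log_ball_ratio nu y r)%E.
Proof.
move=> /andP[r0 r1]; rewrite /log_ball_ratio; case: ifPn => // _.
rewrite lee_fin; apply: mulr_le0.
  apply: ln_le0; rewrite -lee_fin fineK ?fin_num_measure ?probability_le1 //;
    exact: measurable_ball.
by rewrite invr_le0; apply/ltW/ln_lt0; rewrite r0 r1.
Qed.

Lemma upper_dim_ge0 y : (0 <= upper_dim nu y)%E.
Proof.
apply: limsup0_ge => d d0.
have m0 : 0 < Num.min d 1 by rewrite lt_min d0 ltr01.
have md : Num.min d 1 <= d by rewrite ge_min lexx.
have m1 : Num.min d 1 <= 1 by rewrite ge_min lexx orbT.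
exists (Num.min d 1 / 2); first by apply/andP; split; lra.
by apply: log_ball_ratio_ge0; apply/andP; split; lra.
Qed.

Lemma log_ball_ratio_lt y r (t : R) : 0 < r < 1 ->
  (log_ball_ratio nu y r < t%:E)%E -> expR (t * ln r) < fine (nu (ball y r)).
Proof.
move=> /andP[r0 r1]; rewrite /log_ball_ratio; case: ifPn => // nu0.
have lr : ln r < 0 by apply: ln_lt0; rewrite r0 r1.
rewrite lte_fin ltr_ndivrMr // => h.
have : 0 < fine (nu (ball y r)) by rewrite lt_neqAle eq_sym nu0 fine_ge0.
by move=> nu_gt0; rewrite -[X in _ < X]lnK ?posrE // ltr_expR.
Qed.

Lemma upper_dim_lt y (t : R) : (upper_dim nu y < t%:E)%E ->
  exists2 d, 0 < d & forall r, 0 < r < d -> expR (t * ln r) < fine (nu (ball y r)).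
Proof.
move=> /limsup0_lt[d d0 hd]; exists (Num.min d 1); first by rewrite lt_min d0 ltr01.
move=> r /andP[r0]; rewrite lt_min => /andP[rd r1].
by apply: log_ball_ratio_lt; rewrite ?r0 ?r1 // hd // r0 rd.
Qed.

End local_dimension.

Lemma log_tau_ratio_le {R : realType} (T : R -> R) x y r (u : R) (N : nat) : 0 < r < 1 ->
  N%:R <= expR (u * - ln r) -> (exists j, (1 <= j <= N)%N /\ ball y r (iter j T x)) ->
  (log_tau_ratio T x y r <= u%:E)%E.
Proof.
move=> /andP[r0 r1] hN [j [/andP[j1 jN] hit]].
rewrite /log_tau_ratio; case: pselect => [_|[]]; last by exists j.
set P := [set n : nat | _].
have [n Pn] : exists n, P n.
  have ex : exists n, (1 <= n)%N && `[< ball y r (iter n T x) >] by exists j; rewrite j1 asboolT.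
  case: (ex_minnP ex) => n /andP[n1 /asboolP hn] nmin.
  by exists n; split => //; split => // m m1 hm; apply: nmin; rewrite m1 asboolT.
have [n1 [_ nmin]] := xgetPex 0%N (ex_intro P n Pn).
have nj := nmin j j1 hit.
have lr : 0 < - ln r by rewrite oppr_gt0 ln_lt0 // r0 r1.
rewrite lee_fin ler_pdivrMr // -ler_expR lnK ?posrE ?ltr0n //.
by apply: le_trans hN; rewrite ler_nat (leq_trans nj).
Qed.

Section dynamics.
Context {R : realType} (T : R -> R) (nu : probability R R).
Hypothesis measurable_T : measurable_fun I01 T.
Hypothesis T_I01 : forall x, x \in I01 -> T x \in I01.
Hypothesis nu_I01 : nu I01 = 1%E.
Hypothesis T_inv : T_invariant T nu.

Lemma measurable_I01 : measurable (I01 : set R).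
Proof. exact: measurable_itv. Qed.

Lemma iter_I01 n x : I01 x -> I01 (iter n T x).
Proof. by elim: n => //= n IH /IH /mem_set /T_I01 /set_mem. Qed.

Lemma measurable_fun_iter n : measurable_fun I01 (iter n T).
Proof.
elim: n => [|n IH] mI Y mY /=; first by rewrite preimage_id; exact: measurableI.
have -> : I01 `&` (T \o iter n T) @^-1` Y = I01 `&` iter n T @^-1` (I01 `&` T @^-1` Y).
  apply/seteqP; split => x [/= xI hx]; split => //; first by split => //; exact: iter_I01.
  by case: hx.
by apply: IH => //; exact: measurable_T.
Qed.

Lemma measure_setI_I01 X : measurable X -> nu (I01 `&` X) = nu X.
Proof.
move=> mX.
have -> : nu X = (nu (X `\` I01) + nu (X `&` I01))%E := measureDI nu mX measurable_I01.
have nuC : nu (~` I01) = 0%E.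
  by rewrite probability_setC ?nu_I01 ?subee //; exact: measurable_I01.
have -> : nu (X `\` I01) = 0%E.
  apply: (subset_measure0 (measurableD mX measurable_I01) (measurableC measurable_I01)) nuC.
  by move=> x [].
by rewrite add0e setIC.
Qed.

Lemma invariant_iter n B : measurable B -> nu (I01 `&` iter n T @^-1` B) = nu B.
Proof.
move=> mB; elim: n => [|n IH]; first by rewrite /= preimage_id measure_setI_I01.
have -> : I01 `&` iter n.+1 T @^-1` B = I01 `&` T @^-1` (I01 `&` iter n T @^-1` B).
  apply/seteqP; split => x [/= xI hx]; split => //.
    by split; [exact/set_mem/T_I01/mem_set | rewrite -iterSr].
  by case: hx => _; rewrite /= -iterSr.
by rewrite T_inv //; apply: measurable_fun_iter => //; exact: measurable_I01.
Qed.

Definition mass (X : set R) : R := fine (nu X).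

Lemma mass_ge0 X : 0 <= mass X.
Proof. by rewrite /mass fine_ge0. Qed.

Lemma measure_mass {X : set R} : measurable X -> nu X = (mass X)%:E.
Proof. by move=> mX; rewrite /mass fineK // fin_num_measure. Qed.

Lemma mass_le1 {X : set R} : measurable X -> mass X <= 1.
Proof. by move=> mX; rewrite -lee_fin -measure_mass // probability_le1. Qed.

Lemma le_mass {X Y : set R} : measurable X -> measurable Y -> X `<=` Y -> mass X <= mass Y.
Proof. by move=> mX mY XY; rewrite -lee_fin -!measure_mass // le_measure // inE. Qed.

Definition miss (c r : R) (L : nat) : set R :=
  I01 `&` [set x | forall j, (j < L)%N -> ~ ball c r (iter j T x)].

Lemma measurable_miss c r L : measurable (miss c r L).
Proof.
elim: L => [|L IH].
  rewrite /miss (_ : [set x | _] = setT) ?setIT; first exact: measurable_I01.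
  by apply/seteqP; split.
have -> : miss c r L.+1 = miss c r L `&` (I01 `&` iter L T @^-1` (~` ball c r)).
  apply/seteqP; split => x.
    by move=> [xI h]; split; [split => // j jL; apply: h; exact: ltnW | split => //; exact: h].
  move=> [[xI h] [_ hL]]; split => // j; rewrite ltnS leq_eqVlt => /orP[/eqP-> //|].
  exact: h.
apply: measurableI => //; apply: measurable_fun_iter; first exact: measurable_I01.
by apply: measurableC; exact: measurable_ball.
Qed.

Lemma miss_add_subset c r g L : (1 <= g)%N ->
  miss c r (g + L) `<=` (I01 `&` iter g T @^-1` miss c r L) `\` (ball c r `&` I01).
Proof.
move=> g1 x [xI h]; split; last by case=> hit _; apply: (h 0%N) hit; rewrite addn_gt0 g1.
split => //=; split; first exact: iter_I01.
by move=> j jL; rewrite -iterD; apply: h; rewrite addnC ltn_add2l.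
Qed.

Variables (C beta : R).
Hypothesis mixing : forall (c r : R) (B : set R) (n : nat), c \in I01 -> measurable B ->
  (1 <= n)%N -> let A := ball c r `&` I01 in
  (`| nu (A `&` (iter n T) @^-1` B) - nu A * nu B | <= (C * beta ^+ n)%:E * nu B)%E.

Lemma mass_miss_add c r g L : c \in I01 -> (1 <= g)%N ->
  mass (miss c r (g + L)) <=
    (1 - mass (ball c r `&` I01) + C * beta ^+ g) * mass (miss c r L).
Proof.
move=> cI g1.
set A := ball c r `&` I01; set M := miss c r L; set S := I01 `&` iter g T @^-1` M.
have mA : measurable A by apply: measurableI; [exact: measurable_ball | exact: measurable_I01].
have mM : measurable M := measurable_miss c r L.
have mS : measurable S by apply: measurable_fun_iter => //; exact: measurable_I01.
have SA : S `&` A = A `&` iter g T @^-1` M.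
  by apply/seteqP; split => x [] => [[_ h] a | a h]; split => //; split => //; case: a.
have mSA : measurable (S `&` A) := measurableI _ _ mS mA.
have mass_SD : mass (S `\` A) = mass M - mass (S `&` A).
  have finS : (nu S < +oo)%E by rewrite ltey_eq fin_num_measure.
  have nuSD : nu (S `\` A) = (nu S - nu (S `&` A))%E by apply: measureD.
  by rewrite /mass nuSD invariant_iter // !measure_mass.
have mix := mixing c r M g cI mM g1.
rewrite /= -/A -SA !measure_mass // -EFinM -EFinB -EFinM lee_fin ler_norml in mix.
have := le_mass (measurable_miss c r (g + L)) (measurableD mS mA) (miss_add_subset c r g L g1).
case/andP: mix; rewrite -/A mass_SD; lra.
Qed.

Lemma mass_miss_mul c r g q (m : R) : c \in I01 -> (1 <= g)%N ->
  m <= mass (ball c r `&` I01) -> C * beta ^+ g <= m / 2 ->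
  mass (miss c r (q * g)) <= (1 - m / 2) ^+ q.
Proof.
move=> cI g1 hm hg.
have mA : measurable (ball c r `&` I01).
  by apply: measurableI; [exact: measurable_ball | exact: measurable_I01].
have A1 := mass_le1 mA.
elim: q => [|q IH]; first by rewrite mul0n expr0 mass_le1 //; exact: measurable_miss.
rewrite mulSn exprS.
have := mass_miss_add c r g (q * g) cI g1; have := mass_ge0 (miss c r (q * g)).
set M := mass (miss c r (q * g)) in IH *; set a := mass _ in hm A1 *.
move=> M0 step; apply: le_trans step _.
have : (1 - a + C * beta ^+ g) * M <= (1 - m / 2) * M by apply: ler_wpM2r => //; lra.
have : (1 - m / 2) * M <= (1 - m / 2) * (1 - m / 2) ^+ q by apply: ler_wpM2l => //; lra.
lra.
Qed.

(* Hitting times are counted from 1, hence the extra application of T. *)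
Definition late_miss (c r : R) (N : nat) : set R := I01 `&` T @^-1` miss c r N.

Lemma measurable_late_miss c r N : measurable (late_miss c r N).
Proof. by apply: measurable_T; [exact: measurable_I01 | exact: measurable_miss]. Qed.

Lemma mass_late_miss c r N : mass (late_miss c r N) = mass (miss c r N).
Proof. by rewrite /mass /late_miss T_inv //; exact: measurable_miss. Qed.

Lemma hit_of_not_late_miss c r N x : I01 x -> ~ late_miss c r N x ->
  exists j, (1 <= j <= N)%N /\ ball c r (iter j T x).
Proof.
move=> xI; apply: contra_notP => nohit; split => //; split; first exact/set_mem/T_I01/mem_set.
by move=> j jN hit; apply: nohit; exists j.+1; rewrite iterSr.
Qed.

Hypothesis C_gt0 : 0 < C.
Hypothesis beta01 : 0 < beta < 1.
Variable t : R.
Hypothesis t_ge0 : 0 <= t.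

Definition gap_factor : nat := (Num.truncn ((`|ln C| + 1 + 3 * t) / (- ln beta))).+1.

Lemma gap_factor_spec : `|ln C| + 1 + 3 * t <= gap_factor%:R * (- ln beta).
Proof.
have lb : 0 < - ln beta by rewrite oppr_gt0 ln_lt0.
by rewrite -ler_pdivrMr // ltW // truncnS_gt.
Qed.

Definition heavy_late_miss (k i : nat) : set R :=
  if threshold t k <= mass (ball (center k i) (2 * radius k) `&` I01)
  then late_miss (center k i) (2 * radius k) (horizon t gap_factor k) else set0.

Definition bad (k : nat) : set R :=
  \big[setU/set0]_(i < (@last_center R k).+1) heavy_late_miss k i.

Lemma measurable_heavy_late_miss k i : measurable (heavy_late_miss k i).
Proof. by rewrite /heavy_late_miss; case: ifP => _; [exact: measurable_late_miss |]. Qed.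

Lemma measurable_bad k : measurable (bad k).
Proof. by apply: bigsetU_measurable => i _; exact: measurable_heavy_late_miss. Qed.

Lemma measure_bad_le k : (nu (bad k) <= (1 / (2 ^ k.+1)%:R)%:E)%E.
Proof.
have m0 := threshold_gt0 t k; have m1 := threshold_le1 t t_ge0 k.
set a := (1 - threshold t k / 2) ^+ blocks t k.
have a0 : 0 <= a by apply: exprn_ge0; lra.
have each i : (i < (@last_center R k).+1)%N -> (nu (heavy_late_miss k i) <= a%:E)%E.
  rewrite ltnS /heavy_late_miss => iM; case: ifPn => heavy; last by rewrite measure0 lee_fin.
  rewrite (measure_mass (measurable_late_miss _ _ _)) lee_fin mass_late_miss /horizon.
  apply: mass_miss_mul => //; first exact: center_I01.
  exact: mixing_gap gap_factor_spec.
apply: le_trans (content_subadditive nu (A := bad k) (F := heavy_late_miss k)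
  (n := (@last_center R k).+1) _ _ _) _.
- by move=> i _; exact: measurable_heavy_late_miss.
- exact: measurable_bad.
- by [].
apply: le_trans (_ : _ <= \sum_(i < (@last_center R k).+1) a%:E)%E _.
  by apply: lee_sum => i _; exact: each.
by rewrite sumEFin lee_fin sumr_const card_ord -[a *+ _]mulr_natl; exact: union_bound.
Qed.

Lemma measure_lim_sup_bad : nu (lim_sup_set bad) = 0%E.
Proof.
apply: lim_sup_set_cvg0; first exact: measurable_bad.
apply: le_lt_trans (lee_nneseries (v := fun k => (1 / (2 ^ k.+1)%:R)%:E) _ _) _.
- by move=> k _ _; exact: measure_ge0.
- by move=> k _; exact: measure_bad_le.
by apply: le_lt_trans (epsilon_trick0 _ _) _; rewrite ?ltry.
Qed.

Lemma hit_of_not_bad k x y : I01 x -> ~ bad k x -> y \in I01 ->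
  threshold t k < mass (ball y (radius k)) ->
  exists j, (1 <= j <= horizon t gap_factor k)%N /\ ball y (3 * radius k) (iter j T x).
Proof.
move=> xI not_bad yI heavy_y.
have [i iM yc] := near_center k y yI; set c := center k i in yc *.
have sub : ball y (radius k) `<=` ball c (2 * radius k).
  by move=> z yz; rewrite (_ : 2 * _ = radius k + radius k); [exact: ball_triangle yc yz | ring].
have heavy_c : threshold t k <= mass (ball c (2 * radius k) `&` I01).
  rewrite setIC /mass measure_setI_I01; last exact: measurable_ball.
  by apply/ltW/(lt_le_trans heavy_y)/le_mass => //; exact: measurable_ball.
have /hit_of_not_late_miss [// | j [jN hit]] :
    ~ late_miss c (2 * radius k) (horizon t gap_factor k) x.
  move=> late; apply: not_bad; apply: (bigsetU_sup (i := i)); first by rewrite ltnS.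
  by rewrite /heavy_late_miss heavy_c.
exists j; split => //.
by rewrite (_ : 3 * _ = radius k + 2 * radius k); [exact: ball_triangle (ball_sym yc) hit | ring].
Qed.

Lemma upper_rec_le_of_not_bad u K x y : t < u -> I01 x ->
  (forall k, (K <= k)%N -> ~ bad k x) -> y \in I01 ->
  (upper_dim nu y < t%:E)%E -> (upper_rec T x y <= u%:E)%E.
Proof.
move=> tu xI not_bad yI /upper_dim_lt[d d0 heavy].
have [K' horizon_le] := horizon_le_expR t gap_factor t_ge0 u tu.
set K1 := maxn K K'.
apply: (@limsup0_le _ _ _ (Num.min d (expR (- (K1%:R + 1))))).
  by rewrite lt_min d0 expR_gt0.
move=> r /andP[r0]; rewrite lt_min => /andP[rd rK].
have [k [K1k klr small]] := scale_of_small_radius K1 r r0 rK.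
have rk0 := radius_gt0 (R := R) k.
have r1 : r < 1 by apply: lt_le_trans rK _; rewrite expR_le1 oppr_le0 addr_ge0.
have [|j [jN hit]] := hit_of_not_bad k x y xI (not_bad k (leq_trans (leq_maxl K K') K1k)) yI.
  by rewrite threshold_radius heavy // rk0; lra.
apply: (log_tau_ratio_le T x y r u (horizon t gap_factor k)); first by rewrite r0 r1.
  apply: le_trans (horizon_le k (leq_trans (leq_maxr K K') K1k)) _.
  by rewrite ler_expR; apply: ler_wpM2l => //; exact: le_trans t_ge0 (ltW tu).
by exists j; split => //; apply: le_ball hit; lra.
Qed.

Lemma ae_upper_rec_le u : t < u -> {ae nu, forall x, x \in I01 -> forall y, y \in I01 ->
  (upper_dim nu y < t%:E)%E -> (upper_rec T x y <= u%:E)%E}.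
Proof.
move=> tu; eexists; split; [|exact: measure_lim_sup_bad|].
- by apply: bigcap_measurable => // K _; apply: bigcup_measurable => k _; exact: measurable_bad.
move=> x /= not_rec_le; apply: contrapT => /existsNP[K /not_implyP[_ not_bad]].
apply: not_rec_le => /set_mem xI y yI.
by apply: (upper_rec_le_of_not_bad u K x y tu xI) => // k Kk bad_k; apply: not_bad; exists k.
Qed.

End dynamics.

Section approximation.
Context {R : realType} (s : R).
Hypothesis s_gt0 : 0 < s.

Definition lower_approx (j : nat) : R := s - s / j.+1%:R.

Lemma lower_approx_ge0 j : 0 <= lower_approx j.
Proof. by rewrite subr_ge0 ler_pdivrMr ?ltr0n // ler_peMr ?ler1n // ltW. Qed.

Lemma lower_approx_lt_double j : lower_approx j < lower_approx j.*2.+1.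
Proof.
rewrite ltrD2l ltrN2 ltr_pM2l // ltf_pV2 ?posrE ?ltr0n // ltr_nat ltnS -addnn.
by rewrite -addSn leq_addr.
Qed.

Lemma lower_approx_lt j : lower_approx j < s.
Proof. by rewrite gtrDl oppr_lt0 divr_gt0 ?ltr0n. Qed.

Lemma lt_lower_approx d : d < s -> exists j, d < lower_approx j.
Proof.
move=> ds; exists (Num.truncn (s / (s - d))).
have sd : 0 < s - d by rewrite subr_gt0.
have := truncnS_gt (s / (s - d)); rewrite ltr_pdivrMr // mulrC -ltr_pdivrMr ?ltr0n //.
by rewrite /lower_approx; set a := s / _.+1%:R; lra.
Qed.

End approximation.

Lemma ge_of_lower_approx {R : realType} (s : R) (f g : \bar R) : 0 < s -> (0 <= g)%E ->
  (forall j, (g < (lower_approx s j)%:E)%E -> (f <= (lower_approx s j.*2.+1)%:E)%E) ->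
  (s%:E <= f)%E -> (s%:E <= g)%E.
Proof.
move=> s0 + + sf; case: g => [d _ approx_le | _ _ | //]; last exact: leey.
rewrite lee_fin leNgt; apply/negP => /lt_lower_approx[j dj].
have := le_trans sf (approx_le j _); rewrite lte_fin lee_fin => /(_ dj).
by have := lower_approx_lt s s0 j.*2.+1; lra.
Qed.

Theorem lemma5p4 (R : realType) (T : R -> R) (nu : probability R R) (s : R) :
  measurable_fun I01 T ->
  (forall x, x \in I01 -> T x \in I01) ->
  nu I01 = 1%E ->
  T_invariant T nu ->
  exp_mixing T nu ->
  0 <= s ->
  {ae nu, forall x, x \in I01 ->
     forall y, y \in I01 -> (s%:E <= upper_rec T x y)%E -> (s%:E <= upper_dim nu y)%E}.
Proof.
move=> mT T_I01 nu_I01 T_inv [C [beta [C_gt0 [beta01 mixing]]]].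
rewrite le_eqVlt => /predU1P[<- | s_gt0].
  by apply: aeW => x _ y _ _; exact: upper_dim_ge0.
have rate j := ae_upper_rec_le T nu mT T_I01 nu_I01 T_inv C beta mixing C_gt0 beta01
  _ (lower_approx_ge0 s s_gt0 j) _ (lower_approx_lt_double s s_gt0 j).
apply: filterS (ae_foralln rate) => x rate_x xI y yI.
by apply: (ge_of_lower_approx s _ _ s_gt0 (upper_dim_ge0 nu y)) => j; exact: rate_x.
Qed.
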